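(* No randomized mechanism that is truthful in expectation (without money and with verification) for CAs with known $2$-minded bidders has expected approximation ratio at most $1.09$. This holds even restricted to instances with $n=2$ bidders and $m=2$ goods.
   Context: Combinatorial auction with a set $\mathsf U$ of $m$ goods (single copy each) and $n$ bidders; bidder $i$ has a public collection $\mathcal S_i$ of $k$ nonempty subsets of $\mathsf U$ (known bidders; here $k=2$) and a private valuation $v_i:\mathcal S_i\to\mathbb R_{\ge0}$, extended by $v_i(T)=\max\{v_i(S'):S'\in\mathcal S_i,S'\subseteq T\}$ ($0$ if none). A declaration is any valuation $b_i:\mathcal S_i\to\mathbb R_{\ge0}$. A randomized mechanism maps declarations to a probability distribution over feasible allocations (pairwise disjoint sets with $A_i\in\mathcal S_i\cup\{\emptyset\}$). It is truthful in expectation (with verification) if for all $i$, $\mathbf b_{-i}$, true $v_i$ and every declaration $b_i$ that never overbids on an awarded set (i.e., $b_i(A_i(b_i,\mathbf b_{-i}))\le v_i(A_i(b_i,\mathbf b_{-i}))$ for every outcome of the randomization), $\mathbb E[v_i(A_i(v_i,\mathbf b_{-i}))]\ge\mathbb E[v_i(A_i(b_i,\mathbf b_{-i}))]$. Expected approximation ratio $\alpha$: on every truthful input, the expected social welfare is at least $\mathrm{OPT}/\alpha$, where $\mathrm{OPT}$ is the maximum welfare of a feasible allocation. *)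

From mathcomp Require Import all_boot.
From Stdlib Require Import Reals.
Set Implicit Arguments. Unset Strict Implicit. Unset Printing Implicit Defensive.

Local Open Scope R_scope.

Definition Rsum (T : finType) (f : T -> R) : R :=
  foldr Rplus 0 (map f (enum T)).

(* goods are 'I_m, bidders are 'I_n; bundles are {set 'I_m} *)
Definition collections (n m : nat) := 'I_n -> {set {set 'I_m}}.
(* a declaration/valuation profile: bidder i's value on each bundle
   (only the values on sets of S i are meaningful) *)
Definition profile (n m : nat) := 'I_n -> {set 'I_m} -> R.
Definition allocation (n m : nat) := {ffun 'I_n -> {set 'I_m}}.

Definition kminded (n m k : nat) (S : collections n m) : Prop :=
  forall i, #|S i| = k /\ set0 \notin S i.

Definition valid_val (n m : nat) (S : collections n m) (i : 'I_n)
  (v : {set 'I_m} -> R) : Prop :=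
  forall T, T \in S i -> 0 <= v T.

Definition valid_profile (n m : nat) (S : collections n m) (d : profile n m) :=
  forall i, valid_val S i (d i).

Definition vext (n m : nat) (S : collections n m) (i : 'I_n)
  (v : {set 'I_m} -> R) (T : {set 'I_m}) : R :=
  foldr Rmax 0 (map v [seq S' <- enum {set 'I_m} | (S' \in S i) && (S' \subset T)]).

Definition feasible (n m : nat) (S : collections n m) (A : allocation n m) : Prop :=
  (forall i, A i \in S i \/ A i = set0) /\
  (forall i j, i <> j -> [disjoint A i & A j]).

Definition is_distribution (n m : nat) (S : collections n m)
  (p : allocation n m -> R) : Prop :=
  (forall A, 0 <= p A) /\ Rsum p = 1 /\ (forall A, 0 < p A -> feasible S A).

(* randomized mechanism: given public collections and declarations,
   returns the probability of each allocation *)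
Definition mechanism (n m : nat) := collections n m -> profile n m -> allocation n m -> R.

Definition expect (n m : nat) (p : allocation n m -> R) (f : allocation n m -> R) : R :=
  Rsum (fun A => p A * f A).

Definition welfare (n m : nat) (S : collections n m) (v : profile n m)
  (A : allocation n m) : R :=
  Rsum (fun i => vext S i (v i) (A i)).

Definition OPT (n m : nat) (S : collections n m) (v : profile n m) : R :=
  foldr Rmax 0 (map (welfare S v)
    [seq A : allocation n m <- enum (allocation n m) | [forall i, (A i \in S i) || (A i == set0)] &&
        [forall i, forall j, (i != j) ==> [disjoint A i & A j]]]).

Definition upd (n m : nat) (d : profile n m) (i : 'I_n) (b : {set 'I_m} -> R) : profile n m :=
  fun j => if j == i then b else d j.

Definition well_defined (n m k : nat) (M : mechanism n m) : Prop :=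
  forall S d, kminded k S -> valid_profile S d -> is_distribution S (M S d).

Definition truthful_in_expectation (n m k : nat) (M : mechanism n m) : Prop :=
  forall S d i (v b : {set 'I_m} -> R),
    kminded k S -> valid_profile S d -> valid_val S i v -> valid_val S i b ->
    (forall A, 0 < M S (upd d i b) A ->
       vext S i b (A i) <= vext S i v (A i)) ->
    expect (M S (upd d i b)) (fun A => vext S i v (A i))
      <= expect (M S (upd d i v)) (fun A => vext S i v (A i)).

Definition approx_ratio (n m k : nat) (M : mechanism n m) (alpha : R) : Prop :=
  forall S v, kminded k S -> valid_profile S v ->
    OPT S v / alpha <= expect (M S v) (welfare S v).

From mathcomp Require Import all_boot.
From Stdlib Require Import Reals Lra.
Set Implicit Arguments. Unset Strict Implicit. Unset Printing Implicit Defensive.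
Local Open Scope R_scope.

(* Bidder 0 wants {g0} or {g0,g1}; bidder 1 wants {g1} (value 1) or {g0,g1}
   (value 0).  Bidder 0's true valuation is {g0} -> 1, {g0,g1} -> lam = 1.62;
   the deviation declares {g0} -> 0, {g0,g1} -> lam, which never overbids.
   Writing p, q for the probabilities that bidder 0 receives {g0}, resp.
   {g0,g1}, under the truthful profile and r for the probability of {g0,g1}
   under the deviation, a ratio alpha <= 1.09 forces
     2/alpha <= 1 + p + (lam-1) q   (OPT = 2 on the truthful profile),
     lam/alpha <= 1 + (lam-1) r     (OPT = lam on the deviation),
   while truthfulness gives lam r <= p + lam q, and p + q <= 1; these linear
   constraints are infeasible. *)

Lemma Rsum_le (T : finType) (f g : T -> R) :
  (forall x, f x <= g x) -> Rsum f <= Rsum g.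
Proof.
move=> fg; rewrite /Rsum; elim: (enum T) => [|x s IH] /=; first lra.
by have := fg x; lra.
Qed.

Lemma Rsum_ge0 (T : finType) (f : T -> R) : (forall x, 0 <= f x) -> 0 <= Rsum f.
Proof.
move=> f0; rewrite /Rsum; elim: (enum T) => [|x s IH] /=; first lra.
by have := f0 x; lra.
Qed.

Lemma Rsum_affine (T : finType) (a b c : R) (w f g : T -> R) :
  Rsum (fun x => w x * (a + b * f x + c * g x)) =
  a * Rsum w + b * Rsum (fun x => w x * f x) + c * Rsum (fun x => w x * g x).
Proof.
rewrite /Rsum; elim: (enum T) => [|x s IH] /=; first ring.
by rewrite IH; ring.
Qed.

Definition o1 : 'I_2 := @Ordinal 2 1 isT.

Lemma Rsum_I2 (f : 'I_2 -> R) : Rsum f = f ord0 + f o1.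
Proof.
rewrite /Rsum (enum_ordSl 1) (enum_ordSl 0) /=.
have -> : enum 'I_0 = [::] by apply: size0nil; rewrite size_enum_ord.
have -> : lift ord0 ord0 = o1 :> 'I_2 by apply: val_inj.
by rewrite Rplus_0_r.
Qed.

Lemma I2_cases (i : 'I_2) : i = ord0 \/ i = o1.
Proof. by case: i => [[|[|k]] Hk]; [left|right|]; try apply: val_inj. Qed.

Section Expectation.
Variables (n m : nat) (p : allocation n m -> R).
Hypothesis p_ge0 : forall A, 0 <= p A.

Lemma expect_le (f g : allocation n m -> R) :
  (forall A, 0 < p A -> f A <= g A) -> expect p f <= expect p g.
Proof.
move=> fg; apply: Rsum_le => A.
have [pA_pos|pA0] := Rle_lt_or_eq_dec _ _ (p_ge0 A).
  by apply: Rmult_le_compat_l; [exact: p_ge0 | exact: fg].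
by rewrite -pA0 !Rmult_0_l; lra.
Qed.

Lemma expect_ge0 (f : allocation n m -> R) :
  (forall A, 0 <= f A) -> 0 <= expect p f.
Proof. by move=> f0; apply: Rsum_ge0 => A; apply: Rmult_le_pos. Qed.

Lemma expect_affine (a b c : R) (f g : allocation n m -> R) :
  expect p (fun A => a + b * f A + c * g A) =
  a * Rsum p + b * expect p f + c * expect p g.
Proof. exact: Rsum_affine. Qed.
End Expectation.

Section ExtendedValuation.
Variables (n m : nat) (S : collections n m) (i : 'I_n).
Implicit Types (v : {set 'I_m} -> R) (T : {set 'I_m}).

Lemma foldr_Rmax_ge (X : eqType) (f : X -> R) (s : seq X) x :
  x \in s -> f x <= foldr Rmax 0 (map f s).
Proof.
elim: s => [|y s IH] //=; rewrite in_cons => /orP [/eqP ->|xs].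
  exact: Rmax_l.
exact: Rle_trans (IH xs) (Rmax_r _ _).
Qed.

Lemma vext_ge v T S' : S' \in S i -> S' \subset T -> v S' <= vext S i v T.
Proof. by move=> SiS' S'T; apply: foldr_Rmax_ge; rewrite mem_filter SiS' S'T mem_enum. Qed.

Lemma vext_ge0 v T : 0 <= vext S i v T.
Proof.
rewrite /vext; elim: [seq _ <- _ | _] => [|y s IH] /=; first lra.
exact: Rle_trans IH (Rmax_r _ _).
Qed.

Lemma vext_le v T c : 0 <= c ->
  (forall S', S' \in S i -> S' \subset T -> v S' <= c) -> vext S i v T <= c.
Proof.
move=> c0 vc; rewrite /vext; elim: (enum _) => [|y s IH] //=.
case: ifP => [/andP [SiY YT]|_] //=.
by apply: Rmax_lub => //; exact: vc.
Qed.

Lemma vext_mono v w T : (forall X, v X <= w X) -> vext S i v T <= vext S i w T.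
Proof.
move=> vw; apply: vext_le; first exact: vext_ge0.
by move=> S' SiS' S'T; apply: Rle_trans (vw S') (vext_ge w SiS' S'T).
Qed.

Lemma vext_set0 v : set0 \notin S i -> vext S i v set0 <= 0.
Proof.
move=> Si0; apply: vext_le; first lra.
by move=> S' SiS'; rewrite subset0 => /eqP S'0; rewrite -S'0 SiS' in Si0.
Qed.
End ExtendedValuation.

Lemma welfare_le_OPT n m (S : collections n m) (v : profile n m) A :
  feasible S A -> welfare S v A <= OPT S v.
Proof.
move=> [inS disj]; apply: foldr_Rmax_ge; rewrite mem_filter mem_enum andbT.
apply/andP; split; apply/forallP => i.
  by case: (inS i) => [->|->]; rewrite ?eqxx ?orbT.
by apply/forallP => j; apply/implyP => /eqP ij; exact: disj.
Qed.

Definition single0 : {set 'I_2} := [set ord0].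
Definition single1 : {set 'I_2} := [set o1].

Lemma single0_neT : single0 != setT.
Proof. by apply/eqP => /setP/(_ o1); rewrite !inE. Qed.
Lemma single1_neT : single1 != setT.
Proof. by apply/eqP => /setP/(_ ord0); rewrite !inE. Qed.
Lemma set0_ne_single0 : set0 != single0.
Proof. by apply/eqP => /setP/(_ ord0); rewrite !inE. Qed.
Lemma set0_ne_single1 : set0 != single1.
Proof. by apply/eqP => /setP/(_ o1); rewrite !inE. Qed.
Lemma set0_neT : set0 != [set: 'I_2].
Proof. by apply/eqP => /setP/(_ ord0); rewrite !inE. Qed.
Lemma setT_notsub_single0 : ([set: 'I_2] \subset single0) = false.
Proof. by apply/negbTE/negP => /subsetP/(_ o1 (in_setT _)); rewrite !inE. Qed.

Definition SS : collections 2 2 :=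
  fun i => if i == ord0 then [set single0; setT] else [set single1; setT].

Lemma SS_kminded : kminded 2 SS.
Proof.
move=> i; rewrite /SS; case: (i == ord0); rewrite cards2 !inE negb_or.
  by rewrite single0_neT set0_ne_single0 set0_neT.
by rewrite single1_neT set0_ne_single1 set0_neT.
Qed.

Lemma single0_in_SS : single0 \in SS ord0.
Proof. by rewrite /SS /= !inE eqxx. Qed.
Lemma setT_in_SS : setT \in SS ord0.
Proof. by rewrite /SS /= !inE eqxx orbT. Qed.
Lemma single1_in_SS : single1 \in SS o1.
Proof. by rewrite /SS /= !inE eqxx. Qed.

Lemma SS_set0 i : set0 \notin SS i.
Proof. by have [] := SS_kminded i. Qed.

Lemma ord0_neq_o1 : ord0 <> o1 :> 'I_2.
Proof. by move/(congr1 val). Qed.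

Definition lam : R := 81/50.

Definition vtrue : {set 'I_2} -> R :=
  fun T => if T == single0 then 1 else if T == setT then lam else 0.
Definition vlie : {set 'I_2} -> R := fun T => if T == setT then lam else 0.
Definition vother : {set 'I_2} -> R := fun T => if T == single1 then 1 else 0.

Definition base : profile 2 2 := fun _ => vother.

Lemma vtrue_ge0 X : 0 <= vtrue X.
Proof. rewrite /vtrue /lam; case: (X == single0); [lra|case: (X == setT); lra]. Qed.
Lemma vlie_ge0 X : 0 <= vlie X.
Proof. rewrite /vlie /lam; case: (X == setT); lra. Qed.
Lemma vother_ge0 X : 0 <= vother X.
Proof. rewrite /vother; case: (X == single1); lra. Qed.
Lemma vother_le1 X : vother X <= 1.
Proof. rewrite /vother; case: (X == single1); lra. Qed.
Lemma vlie_le_vtrue X : vlie X <= vtrue X.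
Proof.
rewrite /vlie /vtrue; case: (X =P setT) => [->|_].
  by rewrite eq_sym (negbTE single0_neT); lra.
by case: (X == single0); lra.
Qed.

Lemma vtrue_single0 : vtrue single0 = 1.
Proof. by rewrite /vtrue eqxx. Qed.
Lemma vtrue_setT : vtrue setT = lam.
Proof. by rewrite /vtrue eq_sym (negbTE single0_neT) eqxx. Qed.
Lemma vlie_single0 : vlie single0 = 0.
Proof. by rewrite /vlie (negbTE single0_neT). Qed.
Lemma vlie_setT : vlie setT = lam.
Proof. by rewrite /vlie eqxx. Qed.

Lemma valid_base : valid_profile SS base.
Proof. by move=> i T _; exact: vother_ge0. Qed.

Lemma valid_upd (v : {set 'I_2} -> R) :
  (forall X, 0 <= v X) -> valid_profile SS (upd base ord0 v).
Proof. by move=> v0 i T _; rewrite /upd; case: ifP => _; [exact: v0|exact: vother_ge0]. Qed.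

Lemma welfare_upd (v : {set 'I_2} -> R) A :
  welfare SS (upd base ord0 v) A =
  vext SS ord0 v (A ord0) + vext SS o1 vother (A o1).
Proof. by rewrite /welfare Rsum_I2. Qed.

Definition ind (b : bool) : R := if b then 1 else 0.
Definition gets_single (A : allocation 2 2) : R := ind (A ord0 == single0).
Definition gets_both (A : allocation 2 2) : R := ind (A ord0 == setT).

Lemma ind_01 b : 0 <= ind b <= 1.
Proof. by rewrite /ind; case: b; lra. Qed.

Lemma bidder0_cases A : feasible SS A ->
  A ord0 = single0 \/ A ord0 = setT \/ A ord0 = set0.
Proof.
by move=> [inS _]; case: (inS ord0) => [|->]; [rewrite /SS !inE => /orP [/eqP|/eqP]|]; tauto.
Qed.

Lemma bidder0_value_le (v : {set 'I_2} -> R) A :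
  0 <= v single0 <= v setT -> feasible SS A ->
  vext SS ord0 v (A ord0) <= v single0 * gets_single A + v setT * gets_both A.
Proof.
move=> [v0 v0T] /bidder0_cases; rewrite /gets_single /gets_both /ind.
case=> [->|[->|->]].
- rewrite eqxx (negbTE single0_neT).
  have : vext SS ord0 v single0 <= v single0.
    apply: vext_le => // S'; rewrite /SS !inE => /orP [/eqP ->|/eqP ->] //.
      by move=> _; lra.
    by rewrite setT_notsub_single0.
  lra.
- rewrite eq_sym (negbTE single0_neT) eqxx.
  have : vext SS ord0 v setT <= v setT.
    apply: vext_le; first lra.
    by move=> S'; rewrite /SS !inE => /orP [/eqP ->|/eqP ->] _; lra.
  lra.
- rewrite (negbTE set0_ne_single0) (negbTE set0_neT).
  by have := vext_set0 v (SS_set0 ord0); lra.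
Qed.

Lemma bidder0_value_ge (v : {set 'I_2} -> R) A :
  v setT * gets_both A <= vext SS ord0 v (A ord0).
Proof.
rewrite /gets_both /ind; case: eqP => [->|_]; last by have := vext_ge0 SS ord0 v (A ord0); lra.
by rewrite Rmult_1_r; apply: vext_ge setT_in_SS (subxx _).
Qed.

Lemma bidder1_value_le A : feasible SS A ->
  vext SS o1 vother (A o1) <= 1 - gets_both A.
Proof.
move=> [_ disj]; rewrite /gets_both /ind; case: eqP => [A0T|_].
  have /eqP A1 : A o1 == set0.
    by move: (disj _ _ ord0_neq_o1); rewrite A0T -setI_eq0 setTI.
  by rewrite A1; have := vext_set0 vother (SS_set0 o1); lra.
apply: vext_le; first lra.
by move=> S' _ _; have := vother_le1 S'; lra.
Qed.

Definition split_alloc : allocation 2 2 :=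
  [ffun i => if i == ord0 then single0 else single1].
Definition grand_alloc : allocation 2 2 :=
  [ffun i => if i == ord0 then setT else set0].

Lemma split_feasible : feasible SS split_alloc.
Proof.
split=> [i|i j ij]; rewrite !ffunE.
  by left; case: (I2_cases i) => ->; [exact: single0_in_SS | exact: single1_in_SS].
by case: (I2_cases i) (I2_cases j) ij => -> [->|->] // _;
  rewrite /= disjoints1 in_set1.
Qed.

Lemma grand_feasible : feasible SS grand_alloc.
Proof.
split=> [i|i j ij]; rewrite !ffunE.
  by case: (I2_cases i) => ->; [left; exact: setT_in_SS | right].
by case: (I2_cases i) (I2_cases j) ij => -> [->|->] // _;
  rewrite /= -setI_eq0 ?setI0 ?set0I.
Qed.

Lemma OPT_truth : 2 <= OPT SS (upd base ord0 vtrue).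
Proof.
apply: Rle_trans (welfare_le_OPT _ split_feasible); rewrite welfare_upd !ffunE /=.
have := vext_ge vtrue single0_in_SS (subxx _).
have := vext_ge vother single1_in_SS (subxx _).
by rewrite vtrue_single0 /vother eqxx; lra.
Qed.

Lemma OPT_lie : lam <= OPT SS (upd base ord0 vlie).
Proof.
apply: Rle_trans (welfare_le_OPT _ grand_feasible); rewrite welfare_upd !ffunE /=.
have := vext_ge vlie setT_in_SS (subxx _); have := vext_ge0 SS o1 vother set0.
by rewrite vlie_setT; lra.
Qed.

Section Distribution.
Variable mu : allocation 2 2 -> R.
Hypothesis mu_dist : is_distribution SS mu.

Let mu_ge0 : forall A, 0 <= mu A := proj1 mu_dist.
Let mu_sum1 : Rsum mu = 1 := proj1 (proj2 mu_dist).
Let mu_feas : forall A, 0 < mu A -> feasible SS A := proj2 (proj2 mu_dist).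

Lemma prob_single_ge0 : 0 <= expect mu gets_single.
Proof. by apply: expect_ge0 => // A; case: (ind_01 (A ord0 == single0)). Qed.

Lemma prob_both_ge0 : 0 <= expect mu gets_both.
Proof. by apply: expect_ge0 => // A; case: (ind_01 (A ord0 == setT)). Qed.

(* Bidder 0 cannot receive {g0} and {g0,g1} at once. *)
Lemma prob_single_both_le1 : expect mu gets_single + expect mu gets_both <= 1.
Proof.
have excl A : gets_single A + gets_both A <= 1.
  rewrite /gets_single /gets_both /ind; case: eqP => [->|_].
    by rewrite (negbTE single0_neT); lra.
  by case: (A ord0 == setT); lra.
suff : expect mu (fun A => 0 + 1 * gets_single A + 1 * gets_both A) <=
       expect mu (fun A => 1 + 0 * gets_single A + 0 * gets_both A).
  by rewrite !expect_affine mu_sum1; lra.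
by apply: expect_le => // A _; have := excl A; lra.
Qed.

Lemma expect_value_le (v : {set 'I_2} -> R) : 0 <= v single0 <= v setT ->
  expect mu (fun A => vext SS ord0 v (A ord0)) <=
  v single0 * expect mu gets_single + v setT * expect mu gets_both.
Proof.
move=> vP; suff : expect mu (fun A => vext SS ord0 v (A ord0)) <=
  expect mu (fun A => 0 + v single0 * gets_single A + v setT * gets_both A).
  by rewrite expect_affine; lra.
by apply: expect_le => // A /mu_feas fA; have := bidder0_value_le vP fA; lra.
Qed.

Lemma expect_welfare_le (v : {set 'I_2} -> R) : 0 <= v single0 <= v setT ->
  expect mu (welfare SS (upd base ord0 v)) <=
  1 + v single0 * expect mu gets_single + (v setT - 1) * expect mu gets_both.
Proof.
move=> vP; have := expect_le mu_ge0 (f := welfare SS (upd base ord0 v))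
  (g := fun A => 1 + v single0 * gets_single A + (v setT - 1) * gets_both A).
rewrite expect_affine mu_sum1 Rmult_1_r; apply=> A /mu_feas fA; rewrite welfare_upd.
by have := bidder0_value_le vP fA; have := bidder1_value_le fA; lra.
Qed.
End Distribution.

Lemma expect_value_ge (mu : allocation 2 2 -> R) (v : {set 'I_2} -> R) :
  (forall A, 0 <= mu A) ->
  v setT * expect mu gets_both <= expect mu (fun A => vext SS ord0 v (A ord0)).
Proof.
move=> mu_ge0; suff : expect mu (fun A => 0 + v setT * gets_both A + 0 * gets_both A) <=
  expect mu (fun A => vext SS ord0 v (A ord0)).
  by rewrite expect_affine; lra.
by apply: expect_le => // A _; have := bidder0_value_ge v A; lra.
Qed.

(* A lower bound on OPT turns the approximation guarantee into a welfare bound. *)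
Lemma approx_lower alpha c x y : 0 < alpha -> c <= x -> x / alpha <= y -> c / alpha <= y.
Proof.
move=> a0 cx; apply: Rle_trans; apply: Rmult_le_compat_r cx.
exact: Rlt_le (Rinv_0_lt_compat _ a0).
Qed.

Lemma lower_bound_lp alpha p q r : 0 < alpha -> alpha <= 109/100 ->
  0 <= p -> 0 <= q -> p + q <= 1 ->
  2 / alpha <= 1 + p + (lam - 1) * q ->
  lam / alpha <= 1 + (lam - 1) * r ->
  lam * r <= p + lam * q -> False.
Proof.
move=> a0 a1 p0 q0 pq wt wl tr.
have ia : 100/109 <= / alpha.
  have := Rinv_le_contravar _ _ a0 a1.
  by have -> : / (109/100) = 100/109 by field.
rewrite /Rdiv in wt wl; rewrite /lam in wl tr wt; lra.
Qed.

Theorem theorem13 :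
  forall (M : mechanism 2 2) (alpha : R),
    well_defined 2 M -> truthful_in_expectation 2 M ->
    0 < alpha -> alpha <= 109 / 100 ->
    ~ approx_ratio 2 M alpha.
Proof.
move=> M alpha wdM trM a0 a1 apxM.
have valid_truth := valid_upd vtrue_ge0; have valid_lie := valid_upd vlie_ge0.
set mu := M SS (upd base ord0 vtrue); set nu := M SS (upd base ord0 vlie).
have dist_mu : is_distribution SS mu := wdM SS _ SS_kminded valid_truth.
have dist_nu : is_distribution SS nu := wdM SS _ SS_kminded valid_lie.
have vtrue_mono : 0 <= vtrue single0 <= vtrue setT.
  by rewrite vtrue_single0 vtrue_setT /lam; lra.
have vlie_mono : 0 <= vlie single0 <= vlie setT.
  by rewrite vlie_single0 vlie_setT /lam; lra.
have welfare_truth : 2 / alpha <= 1 + expect mu gets_single + (lam - 1) * expect mu gets_both.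
  apply: approx_lower a0 OPT_truth (Rle_trans _ _ _ (apxM SS _ SS_kminded valid_truth) _).
  by have := expect_welfare_le dist_mu vtrue_mono; rewrite vtrue_single0 vtrue_setT -/mu; lra.
have welfare_lie : lam / alpha <= 1 + (lam - 1) * expect nu gets_both.
  apply: approx_lower a0 OPT_lie (Rle_trans _ _ _ (apxM SS _ SS_kminded valid_lie) _).
  by have := expect_welfare_le dist_nu vlie_mono; rewrite vlie_single0 vlie_setT -/nu; lra.
(* the lie never overbids, so truthfulness bounds bidder 0's true utility *)
have utility : lam * expect nu gets_both <= expect mu gets_single + lam * expect mu gets_both.
  have := trM SS base ord0 vtrue vlie SS_kminded valid_base
    (fun T _ => vtrue_ge0 T) (fun T _ => vlie_ge0 T)
    (fun A _ => vext_mono _ _ _ vlie_le_vtrue).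
  have := expect_value_ge vtrue (proj1 dist_nu).
  have := expect_value_le dist_mu vtrue_mono.
  by rewrite vtrue_single0 vtrue_setT -/mu -/nu; lra.
exact: (lower_bound_lp a0 a1 (prob_single_ge0 dist_mu) (prob_both_ge0 dist_mu)
          (prob_single_both_le1 dist_mu) welfare_truth welfare_lie utility).
Qed.
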